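(* There is a constant $C_3>0$ such that for every $\ell\ge1$ and all $p,q\in\mathbb N\times\mathbb Z$, $$(G_1\cdot G_2)^\ell(p,q)\le C_3^{|p|+|q|}.$$ Moreover, if $(G_1\cdot G_2)^\ell(p,q)\ne0$ then $q-p\in\Sigma_\ell$, where $$\Sigma_\ell=\{(x,y)\in\mathbb Z^2:\ x+y\ge\ell,\ y\ge-2\ell,\ 4x+3y\ge0,\ 2x+3y\ge0,\ y\text{ even}\}.$$
   Context: $\mathbb N=\{0,1,2,\dots\}$; for $t\in\mathbb R$, $\langle t\rangle:=1+|t|$. A directed weighted $\mathbb Z^2$-graph is a map $G\colon\mathbb Z^2\times\mathbb Z^2\to[0,\infty)$. The product is $(G\cdot G')(p,q)=\sum_{r\in\mathbb Z^2}G(p,r)G'(r,q)$, and $G^\ell$ is the $\ell$-fold product of $G$ with itself. $G_1$ is the graph whose only nonzero weights are: $G_1((k,h),(k-2,h+2))=\frac{\langle\max\{k,|h|\}\rangle}{\langle h\rangle}$ for $k\ge2$, $h\in\mathbb Z$; $G_1((k,h),(k,h))=1$ for $k\ge0$, $h\in\mathbb Z$; $G_1((k,h),(k+2,h-2))=\frac{\langle h\rangle}{\langle\max\{k,|h|\}\rangle}$ for $k\ge0$, $h\in\mathbb Z$. $G_2((k,h),(k',h'))=1$ if $k,k'\ge0$, $(k,h)\ne(k',h')$ and $(k'-k,h'-h)\in\{c_1(1,0)+c_2(-1,2): c_1,c_2\in\mathbb N\}$, and $G_2((k,h),(k',h'))=0$ otherwise. *)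

From HB Require Import structures.
From mathcomp Require Import all_boot all_order all_algebra.
From mathcomp Require Import all_classical all_reals.
From mathcomp Require Import ereal esum.
Set Implicit Arguments. Unset Strict Implicit. Unset Printing Implicit Defensive.
Import Order.TTheory GRing.Theory Num.Theory.
Local Open Scope classical_set_scope.
Local Open Scope ring_scope.

Definition vtx := (int * int)%type.

Section Graphs.
Variable R : realType.

(* A directed weighted Z^2-graph, with values taken in the extended reals
   (the weights of G1, G2 are finite nonnegative reals; products are
   nonnegative series over Z^2, hence valued in [0, +oo]). *)
Definition graph := vtx -> vtx -> \bar R.

Definition jap (t : int) : R := 1 + `|t%:~R : R|.

Definition gprod (G G' : graph) : graph :=
  fun p q => \esum_(r in [set: vtx]) (G p r * G' r q)%E.

Definition gid : graph := fun p q => if p == q then 1%E else 0%E.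

Fixpoint gpow (G : graph) (l : nat) : graph :=
  match l with
  | 0 => gid
  | l'.+1 => gprod (gpow G l') G
  end.

Definition G1 : graph := fun p q =>
  let k := p.1 in let h := p.2 in
  if (2 <= k) && (q == (k - 2, h + 2)) then
    (jap (Num.max k `|h|%:Z) / jap h)%:E
  else if (0 <= k) && (q == p) then 1%E
  else if (0 <= k) && (q == (k + 2, h - 2)) then
    (jap h / jap (Num.max k `|h|%:Z))%:E
  else 0%E.

Definition G2 : graph := fun p q =>
  if `[< 0 <= p.1 /\ 0 <= q.1 /\ p <> q /\
        exists c1 c2 : nat,
          q.1 - p.1 = c1%:Z * 1 + c2%:Z * (-1) /\
          q.2 - p.2 = c1%:Z * 0 + c2%:Z * 2 >]
  then 1%E else 0%E.

End Graphs.

Definition Sigma (l : nat) : set vtx :=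
  [set v | let x := v.1 in let y := v.2 in
     [/\ l%:Z <= x + y, - (2 * l%:Z) <= y, 0 <= 4 * x + 3 * y,
         0 <= 2 * x + 3 * y & (2 %| y)%Z]].

(* |p| for p in Z^2, taken as the l^1 norm |k| + |h| *)
Definition vnorm (p : vtx) : nat := (`|p.1| + `|p.2|)%N.

Definition vsub (q p : vtx) : vtx := (q.1 - p.1, q.2 - p.2).

From HB Require Import structures.
From mathcomp Require Import all_boot all_order all_algebra.
From mathcomp Require Import all_classical all_reals.
From mathcomp Require Import ereal esum.
From mathcomp Require finmap.
From mathcomp Require Import zify ring lra.
Set Implicit Arguments. Unset Strict Implicit. Unset Printing Implicit Defensive.
Import Order.TTheory GRing.Theory Num.Theory.
Local Open Scope classical_set_scope.
Local Open Scope ring_scope.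

(* Write s(k, h) = k + h, t(k, h) = floor(h / 2) and a = max(s, 0), and let
   P_n(a) = (1 + a / (2n))^n, an approximation of e^(a/2) that increases with n.
   The potential pot(k, h) = P_t(a) for t >= 0 and 1 / P_(-t)(a) for t < 0
   dominates G1: a step of G1 keeps s and moves t by at most one, and
   G1(r, r') <= 8 pot(r') / pot(r).  An edge of G2 raises s by some c >= 1 and
   does not lower t, so it loses at most a factor 2^c of potential.  Hence
   (G1 G2)(r, q) <= 24 2^(s q - s r) pot(q) / pot(r).  The predecessors r of q
   with s q - s r = c1 + c2 are indexed by a shift in {-2, 0, 2} and (c1, c2),
   so summing the weights 2^-(c1 + c2) gives by induction
   (G1 G2)^l(p, q) <= 288^l 4^(s q - s p) pot(q) / pot(p).
   Since l <= s q - s p <= |p| + |q| and (2/3)^|v| <= pot(v) <= (3/2)^|v|,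
   the constant C3 = 1728 works.  The support statement holds because a step
   of G1 G2 moves by a vector of Sigma_1, and Sigma_l + Sigma_1 is contained
   in Sigma_(l+1). *)

Definition vsum (v : vtx) : int := v.1 + v.2.
Definition vlevel (v : vtx) : int := (v.2 %/ 2)%Z.
Definition vmass (v : vtx) : nat := absz (Num.max (vsum v) 0).

(* The vertex r with r + (d, -d) + c1 (1, 0) + c2 (-1, 2) = q, i.e. the
   predecessor of q through a G1 move of shift d and a G2 edge. *)
Definition pred_vtx (q : vtx) (j : int * (nat * nat)) : vtx :=
  (q.1 - j.2.1%:Z + j.2.2%:Z - j.1, q.2 - j.2.2%:Z - j.2.2%:Z + j.1).

Definition pred_index (D : nat) : seq (int * (nat * nat)) :=
  [seq (d, c) | d <- [:: -2; 0; 2],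
                c <- [seq (c1, c2) | c1 <- iota 0 D.+1, c2 <- iota 0 D.+1]].

Section PotentialBounds.
Variable R : realType.
Implicit Types (a y : R) (m n : nat).

(** * An approximation of the exponential *)

Lemma bernoulli_ineq n y : 0 <= y <= 1 -> 1 - n%:R * y <= (1 - y) ^+ n.
Proof.
move=> /andP[y0 y1]; elim: n => [|n IH]; first by rewrite expr0 mul0r subr0.
have h0 : 0 <= (1 - y) ^+ n by apply: exprn_ge0; lra.
have hn : 0 <= n%:R * (y * y) :> R by apply: mulr_ge0 => //; nra.
rewrite exprS -natr1; nra.
Qed.

(* Apply Bernoulli to each half of the exponent. *)
Lemma quarter_le_expr y n : 0 <= y -> n.+1%:R * y <= 1 -> 1/4 <= (1 - y) ^+ n.
Proof.
move=> y0 hy.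
have [n1 [n2 [en h1 h2]]] : exists n1 n2, [/\ n = (n1 + n2)%N,
   (2 * n1 <= n.+1)%N & (2 * n2 <= n.+1)%N].
  by exists (n %/ 2)%N, (n - n %/ 2)%N; split; lia.
have y1 : y <= 1 by have : 1 <= n.+1%:R :> R := ler1n _ _; nra.
have half_le k : (2 * k <= n.+1)%N -> 1/2 <= (1 - y) ^+ k.
  move=> hk; have e : 2 * k%:R <= n.+1%:R :> R by rewrite -natrM ler_nat.
  have y01 : 0 <= y <= 1 by rewrite y0 y1.
  have := bernoulli_ineq k y01; nra.
have := half_le _ h1; have := half_le _ h2; rewrite en exprD; nra.
Qed.

Definition ebase n a := 1 + a / (2 * n%:R).

Definition eapprox n a := ebase n a ^+ n.

Lemma ebase_ge1 n a : 0 <= a -> 1 <= ebase n a.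
Proof. by move=> a0; rewrite /ebase lerDl divr_ge0 // mulr_ge0. Qed.

Lemma eapprox_ge1 n a : 0 <= a -> 1 <= eapprox n a.
Proof. by move=> a0; rewrite /eapprox exprn_ege1 // ebase_ge1. Qed.

Lemma eapprox_gt0 n a : 0 <= a -> 0 < eapprox n a.
Proof. by move=> a0; apply: lt_le_trans (eapprox_ge1 n a0). Qed.

Lemma ebaseS n a : 0 <= a -> (0 < n)%N ->
  ebase n.+1 a = ebase n a * (1 - a / ((n%:R + 1) * (2 * n%:R + a))).
Proof.
move=> a0 n0; have N0 : 0 < n%:R :> R by rewrite ltr0n.
rewrite /ebase -natr1; field.
by apply/and3P; split; rewrite ?lt0r_neq0 //; nra.
Qed.

Lemma ebase_mono n a b : 0 <= a -> a <= b -> ebase n a <= ebase n b.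
Proof. by move=> a0 ab; rewrite /ebase lerD2l ler_wpM2r // invr_ge0 mulr_ge0. Qed.

Lemma ebaseS_le n a : 0 <= a -> (0 < n)%N -> ebase n.+1 a <= ebase n a.
Proof.
move=> a0 n0; have N0 : 0 < n%:R :> R by rewrite ltr0n.
rewrite ebaseS //.
have y0 : 0 <= a / ((n%:R + 1) * (2 * n%:R + a)) by apply: divr_ge0 => //; nra.
have := ebase_ge1 n a0; nra.
Qed.

Lemma eapprox_mono n a b : 0 <= a -> a <= b -> eapprox n a <= eapprox n b.
Proof.
move=> a0 ab; rewrite /eapprox; apply: lerXn2r; rewrite ?nnegrE ?ebase_mono //.
- by have := ebase_ge1 n a0; lra.
- by have := ebase_ge1 n (le_trans a0 ab); lra.
Qed.

Lemma eapprox_leS n a : 0 <= a -> eapprox n a <= eapprox n.+1 a.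
Proof.
move=> a0; case: n => [|n]; first by rewrite /eapprox expr0 expr1 ebase_ge1.
set m := n.+1; have N1 : 1 <= m%:R :> R by rewrite ler1n.
set y := a / ((m%:R + 1) * (2 * m%:R + a)).
have y0 : 0 <= y by apply: divr_ge0 => //; nra.
have y1 : y <= 1 by rewrite /y ler_pdivrMr; nra.
have key : 1 <= ebase m.+1 a * (1 - m%:R * y).
  rewrite -subr_ge0.
  have -> : ebase m.+1 a * (1 - m%:R * y) - 1
      = a ^+ 2 / (2 * (m%:R + 1) ^+ 2 * (2 * m%:R + a)).
    rewrite /ebase /y -natr1; field.
    by apply/andP; split; rewrite lt0r_neq0 //; nra.
  by rewrite divr_ge0 ?sqr_ge0 // !mulr_ge0 ?sqr_ge0 //; nra.
have y01 : 0 <= y <= 1 by rewrite y0 y1.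
have bern := bernoulli_ineq m y01.
have hXn : 0 <= ebase m a ^+ m by apply: exprn_ge0; have := ebase_ge1 m a0; lra.
have hy : 0 <= (1 - y) ^+ m by apply: exprn_ge0; lra.
have E : ebase m.+1 a ^+ m = ebase m a ^+ m * (1 - y) ^+ m.
  by rewrite ebaseS // exprMn.
have : 1 <= ebase m.+1 a * (1 - y) ^+ m by have := ebase_ge1 m.+1 a0; nra.
rewrite /eapprox exprS E; nra.
Qed.

Lemma eapprox_le n m a : 0 <= a -> (m <= n)%N -> eapprox m a <= eapprox n a.
Proof.
move=> a0 /subnK <-; elim: (n - m)%N => [|k IH]; first by rewrite add0n.
by rewrite addSn; apply: le_trans IH (eapprox_leS _ a0).
Qed.

Lemma eapproxS_ge n a : 0 <= a -> ebase n.+1 a * eapprox n a <= 4 * eapprox n.+1 a.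
Proof.
move=> a0; case: n => [|n].
  by rewrite /eapprox expr0 expr1 mulr1; have := ebase_ge1 1 a0; lra.
set m := n.+1; have N1 : 1 <= m%:R :> R by rewrite ler1n.
set y := a / ((m%:R + 1) * (2 * m%:R + a)).
have y0 : 0 <= y by apply: divr_ge0 => //; nra.
have hy : m.+1%:R * y <= 1.
  have -> : m.+1%:R * y = a / (2 * m%:R + a).
    by rewrite -natr1 /y; field; apply/andP; split; rewrite lt0r_neq0 //; nra.
  by rewrite ler_pdivrMr; nra.
have quarter := quarter_le_expr y0 hy.
have X1 := ebase_ge1 m.+1 a0.
have hXn : 0 <= ebase m a ^+ m by apply: exprn_ge0; have := ebase_ge1 m a0; lra.
have E : ebase m.+1 a ^+ m = ebase m a ^+ m * (1 - y) ^+ m.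
  by rewrite ebaseS // exprMn.
rewrite /eapprox exprS E.
have : 0 <= ebase m.+1 a * ebase m a ^+ m by nra.
nra.
Qed.

Lemma eapproxS_le n a : 0 <= a -> eapprox n.+1 a <= ebase n.+1 a * eapprox n a.
Proof.
move=> a0; case: n => [|n]; first by rewrite /eapprox expr0 expr1 mulr1.
have := ebase_ge1 n.+2 a0; have := ebase_ge1 n.+1 a0 => X1 X2.
rewrite /eapprox exprS; apply: ler_wpM2l; first lra.
by rewrite lerXn2r ?ebaseS_le // nnegrE; lra.
Qed.

Lemma eapprox_addr1 n a : 0 <= a -> eapprox n (a + 1) <= 2 * eapprox n a.
Proof.
move=> a0; case: n => [|n]; first by rewrite /eapprox !expr0; lra.
set m := n.+1; have N1 : 1 <= m%:R :> R by rewrite ler1n.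
set z := 1 / (2 * m%:R + a + 1).
have z0 : 0 <= z by apply: divr_ge0 => //; nra.
have z1 : z <= 1 by rewrite /z ler_pdivrMr; nra.
have E : ebase m a = ebase m (a + 1) * (1 - z).
  by rewrite /ebase /z; field; apply/andP; split; rewrite lt0r_neq0 //; nra.
have hz : 1/2 <= 1 - m%:R * z.
  rewrite -subr_ge0.
  have -> : 1 - m%:R * z - 1/2 = (a + 1) / (2 * (2 * m%:R + a + 1)).
    by rewrite /z; field; rewrite lt0r_neq0 //; nra.
  by apply: divr_ge0; nra.
have z01 : 0 <= z <= 1 by rewrite z0 z1.
have := bernoulli_ineq m z01.
have hXn : 0 <= ebase m (a + 1) ^+ m.
  by apply: exprn_ge0; have := ebase_ge1 m (ltW (ltr_wpDl a0 ltr01)); lra.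
rewrite /eapprox E exprMn; nra.
Qed.

Lemma eapprox_le_max n j : eapprox n j%:R <= (3/2) ^+ maxn n j.
Proof.
case: (leqP j n) => hjn.
  case: n hjn => [|n] hjn; first by rewrite /eapprox !expr0.
  rewrite /eapprox; apply: lerXn2r; rewrite ?nnegrE.
  - by have := ebase_ge1 n.+1 (ler0n R j); lra.
  - lra.
  have h : j%:R <= n.+1%:R :> R by rewrite ler_nat.
  have h1 : 1 <= n.+1%:R :> R by rewrite ler1n.
  rewrite /ebase (_ : 3/2 = 1 + 1/2 :> R); last by field.
  by rewrite lerD2l ler_pdivrMr; nra.
apply: le_trans (eapprox_le (ler0n R j) (ltnW hjn)) _.
have j0 : 0 < j%:R :> R by rewrite ltr0n; apply: leq_ltn_trans (leq0n n) hjn.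
rewrite /eapprox /ebase le_eqVlt; apply/orP; left.
by apply/eqP; congr (_ ^+ _); field; rewrite lt0r_neq0.
Qed.

Definition pot_at (t : int) (a : nat) : R :=
  if 0 <= t then eapprox (absz t) a%:R else (eapprox (absz t) a%:R)^-1.

Definition pot (v : vtx) : R := pot_at (vlevel v) (vmass v).

Lemma pot_at_gt0 t (a : nat) : 0 < pot_at t a.
Proof. by rewrite /pot_at; case: ifP; rewrite ?invr_gt0 eapprox_gt0. Qed.

Lemma pot_gt0 v : 0 < pot v.
Proof. exact: pot_at_gt0. Qed.

Lemma pot_at_le t (a : nat) : pot_at t a <= eapprox (absz t) a%:R.
Proof.
rewrite /pot_at; case: ifP => // _.
apply: le_trans (eapprox_ge1 _ (ler0n _ _)).
by rewrite invr_le1 ?unitfE ?lt0r_neq0 ?eapprox_gt0 ?eapprox_ge1.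
Qed.

Lemma pot_at_ge t (a : nat) : (eapprox (absz t) a%:R)^-1 <= pot_at t a.
Proof.
rewrite /pot_at; case: ifP => // _.
apply: le_trans (eapprox_ge1 _ (ler0n _ _)).
by rewrite invr_le1 ?unitfE ?lt0r_neq0 ?eapprox_gt0 ?eapprox_ge1.
Qed.

Lemma pot_atS t (a : nat) : pot_at t a <= pot_at (t + 1) a.
Proof.
rewrite /pot_at; case: (lerP 0 t) => ht.
  rewrite (_ : 0 <= t + 1); last by lia.
  by rewrite (_ : absz (t + 1) = (absz t).+1); [exact: eapprox_leS|lia].
case: (lerP 0 (t + 1)) => ht1.
  rewrite (_ : absz (t + 1) = 0%N); last by lia.
  rewrite (_ : absz t = 1%N); last by lia.
  rewrite {2}/eapprox expr0 invr_le1 ?unitfE ?lt0r_neq0 ?eapprox_gt0 //.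
  exact: eapprox_ge1.
rewrite (_ : absz t = (absz (t + 1)).+1); last by lia.
by rewrite lef_pV2 ?posrE ?eapprox_gt0 // eapprox_leS.
Qed.

Lemma pot_at_leS t (a : nat) : pot_at t a <= 2 * pot_at t a.+1.
Proof.
have P0 := eapprox_ge1 (absz t) (ler0n R a).
have P1 := eapprox_ge1 (absz t) (ler0n R a.+1).
have mono : eapprox (absz t) a%:R <= eapprox (absz t) a.+1%:R.
  by apply: eapprox_mono; rewrite ?ler0n // ler_nat.
rewrite /pot_at; case: ifP => _; first lra.
have grow : eapprox (absz t) a.+1%:R <= 2 * eapprox (absz t) a%:R.
  by rewrite -natr1 eapprox_addr1.
rewrite (_ : 2 * _^-1 = (eapprox (absz t) a.+1%:R / 2)^-1); last first.
  by rewrite invfM invrK mulrC.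
by rewrite lef_pV2 ?posrE; lra.
Qed.

Lemma pot_at_le_shift t (a c j : nat) :
  pot_at t a <= 2 ^+ j * pot_at (t + c%:Z) (a + j)%N.
Proof.
have level : pot_at t a <= pot_at (t + c%:Z) a.
  elim: c => [|c IH]; first by rewrite addr0.
  by apply: le_trans IH _; rewrite -addn1 PoszD addrA pot_atS.
apply: le_trans level _; elim: j => [|j IH]; first by rewrite expr0 mul1r addn0.
apply: le_trans IH _; rewrite addnS exprS [2 * _]mulrC -mulrA.
by rewrite ler_pM2l ?exprn_gt0 // pot_at_leS.
Qed.

Lemma eapprox_vtx_le v :
  eapprox (absz (vlevel v)) (vmass v)%:R <= (3/2) ^+ vnorm v.
Proof.
apply: le_trans (eapprox_le_max _ _) _.
by rewrite ler_eXn2l; [rewrite /vlevel /vmass /vsum /vnorm; lia|lra].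
Qed.

Lemma pot_le v : pot v <= (3/2) ^+ vnorm v.
Proof. exact: le_trans (pot_at_le _ _) (eapprox_vtx_le v). Qed.

Lemma invr_pot_le v : (pot v)^-1 <= (3/2) ^+ vnorm v.
Proof.
apply: le_trans (eapprox_vtx_le v); have := pot_at_ge (vlevel v) (vmass v).
by rewrite -[X in _ <= X -> _]invrK lef_pV2 ?posrE ?invr_gt0 ?pot_gt0 ?eapprox_gt0.
Qed.

(** * One step of G1 and of G2 against the potential *)

Lemma ler_pdiv_cross (u v x y : R) :
  0 < v -> 0 < y -> u * y <= x * v -> u / v <= x / y.
Proof. by move=> v0 y0 h; rewrite ler_pdivlMr // mulrAC ler_pdivrMr. Qed.

Lemma ebaseS_sub1 n a : (ebase n.+1 a - 1) * (2 * (n%:R + 1)) = a.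
Proof.
by rewrite /ebase addrAC subrr add0r natr1 divfK // mulf_neq0 // lt0r_neq0.
Qed.

Lemma down_ratio (M H A : R) n : 0 <= A -> 0 <= H ->
  1 + M <= 2 * ebase n.+1 A * (1 + H) ->
  (1 + M) / (1 + H) <= 8 * eapprox n.+1 A / eapprox n A.
Proof.
move=> A0 H0 hM; have P0 := eapprox_gt0 n A0; have step := eapproxS_ge n A0.
apply: ler_pdiv_cross => //; first lra.
have : (1 + M) * eapprox n A <= 2 * ebase n.+1 A * (1 + H) * eapprox n A.
  by rewrite ler_wpM2r //; lra.
have : 0 <= 1 + H by lra.
nra.
Qed.

Lemma up_ratio (M H A : R) n : 0 <= A -> 0 <= M -> 0 <= H ->
  (1 + H) * ebase n.+1 A <= 8 * (1 + M) ->
  (1 + H) / (1 + M) <= 8 * eapprox n A / eapprox n.+1 A.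
Proof.
move=> A0 M0 H0 hH; have P0 := eapprox_gt0 n A0; have P1 := eapprox_gt0 n.+1 A0.
have step := eapproxS_le n A0.
apply: ler_pdiv_cross => //; first lra.
have : (1 + H) * eapprox n.+1 A <= (1 + H) * (ebase n.+1 A * eapprox n A).
  by rewrite ler_wpM2l //; lra.
have : (1 + H) * ebase n.+1 A * eapprox n A <= 8 * (1 + M) * eapprox n A.
  by rewrite ler_wpM2r //; lra.
nra.
Qed.

Lemma down_ratio_zero (M H A : R) : 1 <= H -> M <= H + A -> 0 <= A ->
  (1 + M) / (1 + H) <= 8 * eapprox 0 A / (eapprox 1 A)^-1.
Proof.
move=> H1 MHA A0; rewrite invrK /eapprox expr0 expr1 /ebase mulr1.
by rewrite ler_pdivrMr; nra.
Qed.

Lemma up_ratio_zero (M H A : R) : 0 <= H -> H <= 1 -> A <= M + M -> 0 <= A ->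
  (1 + H) / (1 + M) <= 8 * (eapprox 1 A)^-1 / eapprox 0 A.
Proof.
move=> H0 H1 AM A0; rewrite /eapprox expr0 divr1 expr1 /ebase mulr1.
rewrite ler_pdivrMr; last lra.
rewrite mulrAC ler_pdivlMr; last lra.
nra.
Qed.

Lemma down_ratio_pos (M H A : R) n : 0 <= M -> M <= A -> n%:R + n%:R <= H ->
  (1 + M) / (1 + H) <= 8 * eapprox n.+1 A / eapprox n A.
Proof.
move=> M0 MA nH; have N0 : 0 <= n%:R :> R by [].
have A0 : 0 <= A by lra.
apply: down_ratio => //; first lra.
have := ebase_ge1 n.+1 A0; have := ebaseS_sub1 n A; nra.
Qed.

Lemma down_ratio_neg (M H A : R) m : m.+1%:R <= H -> M <= H + A -> 0 <= A ->
  (1 + M) / (1 + H) <= 8 * (eapprox m A)^-1 / (eapprox m.+1 A)^-1.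
Proof.
move=> mH MHA A0; rewrite -natr1 in mH; have N0 : 0 <= m%:R :> R by [].
rewrite !invrK mulrAC; apply: down_ratio => //; first lra.
have := ebase_ge1 m.+1 A0; have := ebaseS_sub1 m A; nra.
Qed.

Lemma up_ratio_pos (M H A : R) m : 0 <= M -> A <= M + M -> H <= A ->
  m.+1%:R + m.+1%:R <= H -> H <= m.+1%:R + m.+1%:R + 1 ->
  (1 + H) / (1 + M) <= 8 * eapprox m A / eapprox m.+1 A.
Proof.
move=> M0 AM HA h1 h2; rewrite -natr1 in h1 h2; have N0 : 0 <= m%:R :> R by [].
have A0 : 0 <= A by lra.
apply: up_ratio => //; first lra.
have := ebase_ge1 m.+1 A0; have := ebaseS_sub1 m A; nra.
Qed.

Lemma up_ratio_neg (M H A : R) n :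
  0 <= H -> H <= n%:R + n%:R -> H + A <= M -> 0 <= A ->
  (1 + H) / (1 + M) <= 8 * (eapprox n.+1 A)^-1 / (eapprox n A)^-1.
Proof.
move=> H0 Hn HAM A0; have N0 : 0 <= n%:R :> R by [].
rewrite !invrK mulrAC; apply: up_ratio => //; first lra.
have := ebase_ge1 n.+1 A0; have := ebaseS_sub1 n A; nra.
Qed.

Local Ltac natr_lia :=
  rewrite -?pmulrn -?natrD ?natr1 ?ler_nat ?ler1n ?lern1 //; lia.

Lemma G1_down_le (k h : int) : 0 <= k ->
  jap R (Num.max k `|h|%:Z) / jap R h <= 8 * pot (k - 2, h + 2) / pot (k, h).
Proof.
move=> k0; rewrite /pot /vlevel /vmass /vsum /=.
rewrite (_ : k - 2 + (h + 2) = k + h); last by lia.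
rewrite (_ : ((h + 2) %/ 2)%Z = (h %/ 2)%Z + 1); last by lia.
set t := (h %/ 2)%Z; have ht1 : t + t <= h by rewrite /t; lia.
have ht2 : h <= t + t + 1 by rewrite /t; lia.
set a := absz (Num.max (k + h) 0).
have ea : a%:Z = Num.max (k + h) 0 by rewrite /a; lia.
rewrite /jap -!intr_norm /pot_at.
case: (lerP 0 t) => ht.
  rewrite (_ : 0 <= t + 1); last by lia.
  rewrite (_ : absz (t + 1) = (absz t).+1); last by lia.
  by apply: down_ratio_pos; natr_lia.
case: (lerP 0 (t + 1)) => ht'.
  rewrite (_ : absz (t + 1) = 0%N); last by lia.
  rewrite (_ : absz t = 1%N); last by lia.
  by apply: down_ratio_zero; natr_lia.
rewrite (_ : absz t = (absz (t + 1)).+1); last by lia.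
by apply: down_ratio_neg; natr_lia.
Qed.

Lemma G1_up_le (k h : int) : 0 <= k ->
  jap R h / jap R (Num.max k `|h|%:Z) <= 8 * pot (k + 2, h - 2) / pot (k, h).
Proof.
move=> k0; rewrite /pot /vlevel /vmass /vsum /=.
rewrite (_ : k + 2 + (h - 2) = k + h); last by lia.
rewrite (_ : ((h - 2) %/ 2)%Z = (h %/ 2)%Z - 1); last by lia.
set t := (h %/ 2)%Z; have ht1 : t + t <= h by rewrite /t; lia.
have ht2 : h <= t + t + 1 by rewrite /t; lia.
set a := absz (Num.max (k + h) 0).
have ea : a%:Z = Num.max (k + h) 0 by rewrite /a; lia.
rewrite /jap -!intr_norm /pot_at.
case: (lerP 1 t) => ht.
  rewrite (_ : 0 <= t); last by lia.
  rewrite (_ : 0 <= t - 1); last by lia.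
  rewrite (_ : absz t = (absz (t - 1)).+1); last by lia.
  by apply: up_ratio_pos; natr_lia.
rewrite (_ : (0 <= t - 1) = false); last by apply/negbTE; lia.
case: (lerP 0 t) => ht'.
  rewrite (_ : absz (t - 1) = 1%N); last by lia.
  rewrite (_ : absz t = 0%N); last by lia.
  by apply: up_ratio_zero; natr_lia.
rewrite (_ : absz (t - 1) = (absz t).+1); last by lia.
by apply: up_ratio_neg; natr_lia.
Qed.

Lemma jap_gt0 (z : int) : 0 < jap R z.
Proof. by rewrite /jap; apply: lt_le_trans ltr01 _; rewrite lerDl. Qed.

Lemma G1_ge0 r r' : (0 <= G1 R r r')%E.
Proof.
have jap_ge0 (z : int) : 0 <= jap R z by exact/ltW/jap_gt0.
by rewrite /G1; repeat case: ifP => _; rewrite ?lee_fin ?divr_ge0.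
Qed.

Lemma G1_supp r r' : G1 R r r' != 0%E ->
  0 <= r.1 /\ [\/ r' = (r.1 - 2, r.2 + 2), r' = r | r' = (r.1 + 2, r.2 - 2)].
Proof.
rewrite /G1; case: ifP => [/andP[hk /eqP ->] _|_]; first by split; [lia|constructor 1].
case: ifP => [/andP[hk /eqP ->] _|_]; first by split; [lia|constructor 2].
case: ifP => [/andP[hk /eqP ->] _|_]; first by split; [lia|constructor 3].
by rewrite eqxx.
Qed.

Lemma G1_le_pot r r' : (G1 R r r' <= (8 * pot r' / pot r)%:E)%E.
Proof.
case: r => k h; have g0 := pot_gt0 (k, h); have g1 := pot_gt0 r'.
rewrite /G1 /=; case: ifP => [/andP[hk /eqP ->]|_].
  by rewrite lee_fin G1_down_le //; lia.
case: ifP => [/andP[hk /eqP ->]|_].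
  by rewrite lee_fin mulfK ?lt0r_neq0 //; lra.
case: ifP => [/andP[hk /eqP ->]|_]; first by rewrite lee_fin G1_up_le.
by rewrite lee_fin divr_ge0 // ?mulr_ge0 // ltW.
Qed.

Lemma G2_ge0 r q : (0 <= G2 R r q)%E.
Proof. by rewrite /G2; case: ifP. Qed.

Lemma G2_le1 r q : (G2 R r q <= 1)%E.
Proof. by rewrite /G2; case: ifP. Qed.

Lemma G2_supp r q : G2 R r q != 0%E ->
  [/\ 0 <= r.1, 0 <= q.1, r <> q &
   exists c1 c2 : nat, q.1 - r.1 = c1%:Z - c2%:Z /\ q.2 - r.2 = c2%:Z + c2%:Z].
Proof.
rewrite /G2; case: asboolP => [[r0 [q0 [rq [c1 [c2 [e1 e2]]]]]] _|_];
  last by rewrite eqxx.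
by split => //; exists c1, c2; split; lia.
Qed.

(* A G2 edge raises the level by c2 and the mass by at most vsum q - vsum r. *)
Lemma G2_pot r q : G2 R r q != 0%E ->
  pot r <= 2 ^+ absz (vsum q - vsum r) * pot q.
Proof.
move=> /G2_supp [_ _ _ [c1 [c2 [e1 e2]]]]; rewrite /pot.
have -> : vlevel q = vlevel r + c2%:Z by rewrite /vlevel; lia.
have -> : vmass q = (vmass r + (vmass q - vmass r))%N by rewrite /vmass /vsum; lia.
apply: le_trans (pot_at_le_shift _ _ c2 (vmass q - vmass r)) _.
rewrite ler_wpM2r ?ler_eXn2l ?ltr1n //; first exact/ltW/pot_at_gt0.
by rewrite /vmass /vsum; lia.
Qed.

(** * The majorant of the powers of G1 G2 *)

Lemma sum_iota_half_le n : \sum_(c <- iota 0 n) (1/2) ^+ c <= 2 :> R.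
Proof.
suff -> : \sum_(c <- iota 0 n) (1/2) ^+ c = 2 - 2 * (1/2) ^+ n :> R.
  by have : 0 <= (1/2 : R) ^+ n := exprn_ge0 _ (ltW _); lra.
elim: n => [|n IH]; first by rewrite big_nil expr0; lra.
by rewrite -addn1 iotaD big_cat /= big_seq1 IH add0n exprD expr1; lra.
Qed.

Lemma sum_pred_index_le (D : nat) (K : R) : 0 <= K ->
  \sum_(j <- pred_index D) K * (1/2) ^+ (j.2.1 + j.2.2) <= 12 * K.
Proof.
move=> K0; set S := \sum_(c1 <- iota 0 D.+1) \sum_(c2 <- iota 0 D.+1)
                      K * (1/2) ^+ c1 * (1/2) ^+ c2.
rewrite /pred_index big_allpairs (eq_bigr (fun=> S)) => [|d _]; last first.
  rewrite big_allpairs; apply: eq_bigr => c1 _; apply: eq_bigr => c2 _.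
  by rewrite /= exprD mulrA.
suff : S <= 4 * K by rewrite !big_cons big_nil /=; lra.
rewrite /S; under eq_bigr => c1 _ do rewrite -mulr_sumr.
rewrite -mulr_suml -mulr_sumr -mulrA -expr2.
set g := \sum_(c <- iota 0 D.+1) _; have g2 : g <= 2 := sum_iota_half_le D.+1.
have g0 : 0 <= g by rewrite sumr_ge0 // => c _; rewrite exprn_ge0.
have : g ^+ 2 <= 4 by nra.
nra.
Qed.

Lemma expr4B_mul2 (D c : nat) : (c <= D)%N ->
  4 ^+ (D - c) * 2 ^+ c = 4 ^+ D * (1/2) ^+ c :> R.
Proof.
move=> cD; rewrite -{2}(subnK cD) exprD -mulrA; congr (_ * _).
by rewrite -exprMn (_ : 4 * (1/2) = 2 :> R) //; lra.
Qed.

Definition majorant l p q : R :=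
  288 ^+ l * 4 ^+ absz (vsum q - vsum p) * pot q / pot p.

Lemma majorant_gt0 l p q : 0 < majorant l p q.
Proof.
apply: divr_gt0 (pot_gt0 p); apply: mulr_gt0 (pot_gt0 q).
by apply: mulr_gt0; apply: exprn_gt0; rewrite ltr0n.
Qed.

Lemma majorant_le l p q : vsum p + l%:Z <= vsum q ->
  majorant l p q <= 1728 ^+ (vnorm p + vnorm q).
Proof.
move=> hl; set N := (vnorm p + vnorm q)%N; set D := absz (vsum q - vsum p).
have lN : (l <= N)%N by move: hl; rewrite /N /vsum /vnorm; lia.
have DN : (D <= N)%N by rewrite /D /N /vsum /vnorm; lia.
have e1 : 288 ^+ l <= 288 ^+ N :> R by rewrite ler_eXn2l //; lra.
have e2 : 4 ^+ D <= 4 ^+ N :> R by rewrite ler_eXn2l //; lra.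
have e3 : pot q * (pot p)^-1 <= (3/2) ^+ vnorm q * (3/2) ^+ vnorm p.
  apply: ler_pM; [exact/ltW/pot_gt0|rewrite invr_ge0; exact/ltW/pot_gt0| |].
  - exact: pot_le.
  - exact: invr_pot_le.
have e4 : 288 ^+ l * 4 ^+ D <= 288 ^+ N * 4 ^+ N :> R.
  by apply: ler_pM e1 e2; apply: exprn_ge0; lra.
rewrite /majorant -/D -mulrA.
apply: le_trans (ler_pM _ _ e4 e3) _.
- by apply: mulr_ge0; apply: exprn_ge0; lra.
- by rewrite mulr_ge0 ?invr_ge0 // ltW // pot_gt0.
rewrite -!exprMn mulrC -exprD addnC -/N -exprMn.
by apply: lerXn2r; rewrite ?nnegrE; lra.
Qed.

Local Open Scope ereal_scope.

Lemma sum_eq_indicator_le (T : eqType) (s : seq T) (x : T) (c : \bar R) :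
  uniq s -> 0 <= c -> \sum_(i <- s) (if x == i then c else 0) <= c.
Proof.
move=> + c0; elim: s => [|i s IH]; first by rewrite big_nil.
move=> /andP[nis us]; rewrite big_cons.
case: ifP => [/eqP exi|_]; last by rewrite add0e IH.
rewrite big1_seq ?adde0 // => j /andP[_ js].
by case: ifP => // /eqP exj; move: nis; rewrite -exi exj js.
Qed.

Lemma esum_le_sum_cover (T : choiceType) (U : eqType) (f : T -> \bar R)
    (L : seq U) (phi : U -> T) :
  (forall i, 0 <= f i) ->
  (forall i, f i != 0 -> exists2 j, j \in L & phi j = i) ->
  \esum_(i in [set: T]) f i <= \sum_(j <- L) f (phi j).
Proof.
move=> f0 cover; apply: ge_ereal_sup => /= _ [X [finX _] <-].
rewrite fsbig_finite //=; set s := finmap.enum_fset _.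
apply: le_trans (_ : \sum_(i <- s) \sum_(j <- L | phi j == i) f (phi j) <= _).
  apply: lee_sum => i _; case: (eqVneq (f i) 0) => [->|/cover [j jL <-]].
    exact: sume_ge0.
  by rewrite (big_rem _ jL) eqxx leeDl // sume_ge0.
rewrite (eq_bigr (fun i => \sum_(j <- L) if phi j == i then f (phi j) else 0));
  last by move=> i _; rewrite big_mkcond.
rewrite exchange_big /=; apply: lee_sum => j _.
exact/sum_eq_indicator_le/f0/finmap.fset_uniq.
Qed.

Lemma esum_neq0 (T : choiceType) (f : T -> \bar R) :
  \esum_(i in [set: T]) f i != 0 -> exists i, f i != 0.
Proof.
move=> h; apply/not_existsP => hn; move/eqP: h; apply.
by apply: esum1 => i _; apply/eqP/negPn/negP => /(hn i).
Qed.

Local Notation G12 := (gprod (G1 R) (G2 R)).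

Lemma G12_ge0 r q : 0 <= G12 r q.
Proof. by apply: esum_ge0 => r' _; rewrite mule_ge0 ?G1_ge0 ?G2_ge0. Qed.

Lemma gpow_G12_ge0 l p q : 0 <= gpow G12 l p q.
Proof.
elim: l q => [|l IH] q; first by rewrite /= /gid; case: ifP.
by apply: esum_ge0 => r _; rewrite mule_ge0 ?G12_ge0.
Qed.

Lemma G12_neq0 r q : G12 r q != 0 ->
  exists d c1 c2, [/\ d \in [:: -2; 0; 2]%R, r = pred_vtx q (d, (c1, c2))
    & Sigma 1 (vsub q r)].
Proof.
move=> /esum_neq0 [r']; rewrite mule_eq0 negb_or => /andP[/G1_supp [_ hr']].
move=> /G2_supp [_ _ r'q [c1 [c2 [e1 e2]]]].
move: r q r' hr' r'q e1 e2 => [k h] [x y] [u w] /= hr' r'q e1 e2.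
have c12 : (1 <= c1 + c2)%N.
  by case: c1 c2 e1 e2 => [|?] [|?] // e1 e2; case: r'q; congr pair; lia.
case: hr' => -[eu ew]; [exists (-2)%R | exists 0%R | exists 2%R];
  exists c1, c2; split => //;
  by [rewrite /pred_vtx /=; congr pair; lia | rewrite /Sigma /vsub /=; split; lia].
Qed.

Lemma Sigma_vsubS l p r q :
  Sigma l.+1 (vsub r p) -> Sigma 1 (vsub q r) -> Sigma l.+2 (vsub q p).
Proof. by rewrite /Sigma /vsub /= => -[? ? ? ? ?] [? ? ? ? ?]; split; lia. Qed.

Lemma gpow_G12_neq0 l p q : gpow G12 l p q != 0 ->
  if l is 0%N then p = q else Sigma l (vsub q p).
Proof.
elim: l q => [|l IH] q.
  by rewrite /= /gid; case: (eqVneq p q) => // _; rewrite eqxx.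
move=> /esum_neq0 [r]; rewrite mule_eq0 negb_or => /andP[/IH pr /G12_neq0].
move=> [_ [_ [_ [_ _ rq]]]]; case: l pr {IH} => [->|l pr] //.
exact: Sigma_vsubS pr rq.
Qed.

Lemma gpow_G12_vsum l p q : gpow G12 l p q != 0 -> (vsum p + l%:Z <= vsum q)%R.
Proof.
move=> /gpow_G12_neq0; case: l => [->|l]; first by rewrite addr0.
by rewrite /Sigma /vsub /vsum /= => -[? ? ? ? ?]; lia.
Qed.

Lemma G1G2_le r r' q : G1 R r r' * G2 R r' q <=
  (8 * 2 ^+ absz (vsum q - vsum r) * pot q / pot r)%:E.
Proof.
have gr := pot_gt0 r; have gq := pot_gt0 q.
have B0 : (0 <= 8 * 2 ^+ absz (vsum q - vsum r) * pot q / pot r)%R.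
  by rewrite divr_ge0 ?mulr_ge0 ?exprn_ge0 // ltW.
case: (eqVneq (G2 R r' q) 0) => [->|/G2_pot pr']; first by rewrite mule0.
case: (eqVneq (G1 R r r') 0) => [->|/G1_supp [_ hr']]; first by rewrite mul0e.
have -> : vsum r = vsum r' by rewrite /vsum; case: hr' => -> /=; lia.
apply: le_trans (lee_pmul (G1_ge0 _ _) (G2_ge0 _ _) (lexx _) (G2_le1 _ _)) _.
rewrite mule1; apply: le_trans (G1_le_pot _ _) _; rewrite lee_fin.
by rewrite -!mulrA ler_pM2l // !mulrA ler_pM2r ?invr_gt0.
Qed.

Lemma G12_le r q :
  G12 r q <= (24 * 2 ^+ absz (vsum q - vsum r) * pot q / pot r)%:E.
Proof.
set L := [:: (r.1 - 2, r.2 + 2)%R; r; (r.1 + 2, r.2 - 2)%R].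
apply: le_trans (@esum_le_sum_cover _ _ _ L id _ _) _.
- by move=> r'; rewrite mule_ge0 ?G1_ge0 ?G2_ge0.
- move=> r'; rewrite mule_eq0 negb_or => /andP[/G1_supp [_ hr'] _].
  by exists r' => //; rewrite !inE; case: hr' => ->; rewrite eqxx ?orbT.
rewrite !big_cons big_nil adde0 /=.
apply: le_trans (leeD (G1G2_le _ _ _) (leeD (G1G2_le _ _ _) (G1G2_le _ _ _))) _.
by rewrite -!EFinD lee_fin; lra.
Qed.

Lemma gpow_G12_cover l p q r : gpow G12 l p r * G12 r q != 0 ->
  exists2 j, j \in pred_index (absz (vsum q - vsum p)) & pred_vtx q j = r.
Proof.
rewrite mule_eq0 negb_or => /andP[/gpow_G12_vsum hs].
move=> /G12_neq0 [d [c1 [c2 [hd er _]]]].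
exists (d, (c1, c2)) => //; apply: allpairs_f => //.
have : (c1 + c2 <= absz (vsum q - vsum p))%N.
  by move: hs; rewrite er /pred_vtx /vsum /=; lia.
by move=> hD; apply: allpairs_f; rewrite mem_iota; lia.
Qed.

Lemma gpow_G12_term_le l p q r c :
  (forall r, gpow G12 l p r <= (majorant l p r)%:E) ->
  (vsum q - vsum r = c%:Z)%R ->
  gpow G12 l p r * G12 r q <= (24 * majorant l p q * (1/2) ^+ c)%:E.
Proof.
move=> IH hc; have gp := pot_gt0 p; have gq := pot_gt0 q; have gr := pot_gt0 r.
have M0 := majorant_gt0 l p q.
case: (eqVneq (gpow G12 l p r) 0) => [->|/gpow_G12_vsum hs].
  rewrite mul0e lee_fin; apply/ltW/mulr_gt0; last exact: exprn_gt0.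
  exact: mulr_gt0.
set D := absz (vsum q - vsum p).
have cD : (c <= D)%N by rewrite /D; lia.
have hr := IH r; have hq := G12_le r q.
rewrite /majorant (_ : absz (vsum r - vsum p) = D - c)%N in hr;
  last by rewrite /D; lia.
rewrite (_ : absz (vsum q - vsum r) = c) in hq; last by lia.
apply: le_trans (lee_pmul (gpow_G12_ge0 _ _ _) (G12_ge0 _ _) hr hq) _.
rewrite -EFinM lee_fin le_eqVlt; apply/orP; left; apply/eqP.
transitivity (288 ^+ l * 24 * (4 ^+ (D - c) * 2 ^+ c) * pot q / pot p)%R.
  by field; rewrite !lt0r_neq0.
by rewrite expr4B_mul2 // /majorant -/D; ring.
Qed.

Lemma gpow_G12_le l p q : gpow G12 l p q <= (majorant l p q)%:E.
Proof.
elim: l q => [|l IH] q.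
  rewrite /= /gid; case: eqVneq => [<-|_]; last exact/ltW/majorant_gt0.
  by rewrite /majorant subrr expr0 !mul1r mulfV // lt0r_neq0 ?pot_gt0.
have K0 := ltW (majorant_gt0 l p q).
apply: le_trans (esum_le_sum_cover _ (@gpow_G12_cover l p q)) _.
  by move=> r; rewrite mule_ge0 ?gpow_G12_ge0 ?G12_ge0.
apply: le_trans (_ : _ <= \sum_(j <- pred_index _)
                            (24 * majorant l p q * (1/2) ^+ (j.2.1 + j.2.2))%:E) _.
  apply: lee_sum => -[d [c1 c2]] _; apply: gpow_G12_term_le => //.
  by rewrite /pred_vtx /vsum /=; lia.
rewrite sumEFin lee_fin; apply: le_trans (sum_pred_index_le _ _) _.
  by rewrite mulr_ge0.
by rewrite /majorant exprS; lra.
Qed.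

End PotentialBounds.

Theorem mainTheorem11 (R : realType) :
  exists C3 : R, 0 < C3 /\
    forall (l : nat) (p q : vtx), (1 <= l)%N -> 0 <= p.1 -> 0 <= q.1 ->
      (gpow (gprod (G1 R) (G2 R)) l p q <= (C3 ^+ (vnorm p + vnorm q))%:E)%E /\
      (gpow (gprod (G1 R) (G2 R)) l p q <> 0%E -> Sigma l (vsub q p)).
Proof.
exists 1728; split=> [|l p q l1 _ _]; first lra.
split; last by case: l l1 => // l _ /eqP /gpow_G12_neq0.
case: (eqVneq (gpow (gprod (G1 R) (G2 R)) l p q) 0%E) => [->|/gpow_G12_vsum hl].
  by rewrite lee_fin; apply: exprn_ge0; lra.
by apply: le_trans (gpow_G12_le _ l p q) _; rewrite lee_fin majorant_le.
Qed.
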